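(* Let $A\in\mathbb{R}^{n\times n}$ be symmetric positive definite with eigenvalues $0<\lambda_1\le\cdots\le\lambda_n$ and a corresponding orthonormal basis of eigenvectors $v_1,\dots,v_n$, let $c\in\mathbb{R}^n$, and consider the Barzilai--Borwein (BB) method applied to $\min_{x\in\mathbb{R}^n} f(x)=\frac12 x^\top Ax-c^\top x$, started from an arbitrary $x_0\in\mathbb{R}^n$. Let $g_k=Ax_k-c$ and write $g_k=\sum_{i=1}^n d_k^i v_i$. Then $$\left|d_{k+1}^i\right|\le \left|d_k^i\right|\cdot\max\left\{\frac{\lambda_i}{\lambda_1}-1,\ 1-\frac{\lambda_i}{\lambda_n}\right\}\quad\text{for all } k\ge 1,\ 1\le i\le n.$$ Moreover, if for some $k\ge 1$ and some index $i$ one of the following conditions holds: (1) $d_{k-1}^i$ is in the shrinking mode, i.e. $\sum_{j=1}^n(\lambda_j-\lambda_i)(d_{k-1}^j)^2\ge 0$; (2) $d_{k-1}^i$ is in the fluctuation mode, i.e. $\sum_{j=1}^n(\lambda_j-\lambda_i)(d_{k-1}^j)^2<0$, and $(d_{k-1}^i)^2\ge\sum_{j=1}^{i-1}(d_{k-1}^j)^2$; then $$\left|d_{k+1}^i\right|\le\left(1-\frac{1}{\kappa}\right)\left|d_k^i\right|,$$ where $\kappa=\lambda_n/\lambda_1$ is the condition number of $A$.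
   Context: The BB method for this problem: $x_1=x_0-\alpha_0 g_0$ with the exact line-search (steepest descent) step $\alpha_0=\frac{g_0^\top g_0}{g_0^\top A g_0}$, and for $k\ge1$, $x_{k+1}=x_k-\alpha_k g_k$ with $\alpha_k=\frac{s_{k-1}^\top s_{k-1}}{s_{k-1}^\top y_{k-1}}$, $s_{k-1}=x_k-x_{k-1}$, $y_{k-1}=g_k-g_{k-1}$; for this quadratic this equals $\alpha_k=\frac{g_{k-1}^\top g_{k-1}}{g_{k-1}^\top A g_{k-1}}$. Equivalently, the coefficients satisfy $d_1^i=d_0^i\cdot\frac{\sum_{j}(\lambda_j-\lambda_i)(d_0^j)^2}{\sum_j\lambda_j(d_0^j)^2}$ and $d_{k+1}^i=d_k^i\cdot\frac{\sum_{j}(\lambda_j-\lambda_i)(d_{k-1}^j)^2}{\sum_j\lambda_j(d_{k-1}^j)^2}$ for $k\ge1$. Convention: if some gradient vanishes, the method has reached the minimizer and all subsequent gradients (coefficients) are taken to be zero. *)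

From mathcomp Require Import all_boot all_order all_algebra.
Set Implicit Arguments. Unset Strict Implicit. Unset Printing Implicit Defensive.
Import Order.TTheory GRing.Theory Num.Theory.
Local Open Scope ring_scope.

Definition dotv {R : fieldType} {n : nat} (u v : 'cV[R]_n) : R :=
  \sum_(i < n) u i 0 * v i 0.

(* gradient of f(x) = 1/2 x^T A x - c^T x *)
Definition qgrad {R : fieldType} {n : nat} (A : 'M[R]_n) (c : 'cV[R]_n)
  (x : 'cV[R]_n) : 'cV[R]_n := A *m x - c.

(* First step: exact line search (Cauchy) step size. *)
Definition bb_x1 {R : fieldType} {n : nat} (A : 'M[R]_n) (c x0 : 'cV[R]_n) :=
  let g0 := qgrad A c x0 in
  x0 - (dotv g0 g0 / dotv g0 (A *m g0)) *: g0.

Definition bb_step {R : fieldType} {n : nat} (A : 'M[R]_n) (c : 'cV[R]_n)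
  (xprev xcur : 'cV[R]_n) : 'cV[R]_n :=
  let s := xcur - xprev in
  let y := qgrad A c xcur - qgrad A c xprev in
  xcur - (dotv s s / dotv s y) *: qgrad A c xcur.

(* bb_pair k = (x_k, x_{k+1}) *)
Fixpoint bb_pair {R : fieldType} {n : nat} (A : 'M[R]_n) (c x0 : 'cV[R]_n)
  (k : nat) : 'cV[R]_n * 'cV[R]_n :=
  match k with
  | 0%N => (x0, bb_x1 A c x0)
  | k'.+1 => let p := bb_pair A c x0 k' in (p.2, bb_step A c p.1 p.2)
  end.

Definition bb_iter {R : fieldType} {n : nat} (A : 'M[R]_n) (c x0 : 'cV[R]_n)
  (k : nat) : 'cV[R]_n := (bb_pair A c x0 k).1.

Definition bb_grad {R : fieldType} {n : nat} (A : 'M[R]_n) (c x0 : 'cV[R]_n)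
  (k : nat) : 'cV[R]_n := qgrad A c (bb_iter A c x0 k).

From mathcomp Require Import all_boot all_order all_algebra.
From mathcomp Require Import ring lra.
Import Order.TTheory GRing.Theory Num.Theory.
Set Implicit Arguments. Unset Strict Implicit. Unset Printing Implicit Defensive.
Local Open Scope ring_scope.

(* On a quadratic, the BB step alpha_k equals the exact line-search step of the
   previous gradient, so in the eigenbasis d_(k+1)^i = (1 - alpha_k lam_i) d_k^i
   with alpha_k = D / L, D = sum_j (d_(k-1)^j)^2 and L = sum_j lam_j (d_(k-1)^j)^2.
   As a weighted mean of the 1 / lam_j, alpha_k lies in [1 / lam_n, 1 / lam_1],
   which gives the first bound. In the shrinking mode L >= lam_i D, hence
   lam_1 / lam_n <= alpha_k lam_i <= 1. In the fluctuation mode the excess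
   lam_i D - L is at most (lam_i - lam_1) (d_(k-1)^i)^2 <= (1 - 1/kappa) L once
   the weights below i are dominated by (d_(k-1)^i)^2, so that
   alpha_k lam_i - 1 <= 1 - 1/kappa. *)

Definition cauchy_step {R : fieldType} {n : nat} (A : 'M[R]_n) (g : 'cV[R]_n) : R :=
  dotv g g / dotv g (A *m g).

Definition cauchy_coef {R : fieldType} {n : nat} (lam w : 'I_n -> R) : R :=
  (\sum_j w j) / (\sum_j lam j * w j).

Lemma dotvE {R : fieldType} {n : nat} (u v : 'cV[R]_n) : dotv u v = (u^T *m v) 0 0.
Proof. by rewrite /dotv mxE; apply: eq_bigr => i _; rewrite mxE. Qed.

Lemma dotvZZ {R : fieldType} {n : nat} (a b : R) (u v : 'cV[R]_n) :
  dotv (a *: u) (b *: v) = a * b * dotv u v.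
Proof. by rewrite /dotv mulr_sumr; apply: eq_bigr => j _; rewrite !mxE; ring. Qed.

Lemma dotv_col {R : fieldType} {n : nat} (u v : 'I_n -> R) :
  dotv (\col_j u j) (\col_j v j) = \sum_j u j * v j.
Proof. by apply: eq_bigr => j _; rewrite !mxE. Qed.

Lemma dotvv_gt0 {R : realFieldType} {n : nat} (u : 'cV[R]_n) : u != 0 -> 0 < dotv u u.
Proof.
move=> u_neq0; have sq_ge0 j : 0 <= u j 0 * u j 0 by exact: sqr_ge0.
rewrite lt_def sumr_ge0 ?andbT //; apply: contraNneq u_neq0 => /psumr_eq0P u_sq0.
apply/eqP/colP => j; have /eqP := u_sq0 (fun j _ => sq_ge0 j) j isT.
by rewrite -expr2 sqrf_eq0 mxE => /eqP.
Qed.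

Lemma comb_mulmx {R : comPzRingType} {m n : nat} (V : 'M[R]_(m, n)) (w : 'I_n -> R) :
  \sum_j w j *: col j V = V *m \col_j w j.
Proof. by apply/colP => i; rewrite summxE !mxE; apply: eq_bigr => j _; rewrite !mxE mulrC. Qed.

Lemma qgrad_descent {R : fieldType} {n : nat} (A : 'M[R]_n) (c x : 'cV[R]_n) (a : R) :
  qgrad A c (x - a *: qgrad A c x) = qgrad A c x - a *: (A *m qgrad A c x).
Proof. by rewrite /qgrad mulmxBr -scalemxAr addrAC. Qed.

Lemma bb_step_stalled {R : fieldType} {n : nat} (A : 'M[R]_n) (c x : 'cV[R]_n) :
  bb_step A c x x = x.
Proof.
rewrite /bb_step subrr /dotv big1 => [|j _].
  by rewrite mul0r scale0r subr0.
by rewrite mxE mul0r.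
Qed.

Lemma bb_step_descent {R : fieldType} {n : nat} (A : 'M[R]_n) (c x : 'cV[R]_n) (a : R) :
  a != 0 -> let x' := x - a *: qgrad A c x in
  bb_step A c x x' = x' - cauchy_step A (qgrad A c x) *: qgrad A c x'.
Proof.
move=> a_neq0 x'; rewrite /bb_step /x' qgrad_descent; set g := qgrad A c x.
have -> : x - a *: g - x = - a *: g by rewrite addrAC subrr add0r scaleNr.
have -> : g - a *: (A *m g) - g = - a *: (A *m g) by rewrite addrAC subrr add0r scaleNr.
by rewrite !dotvZZ -mulf_div divff ?mul1r // mulf_neq0 ?oppr_eq0.
Qed.

Section BBIteration.

Variables (R : realFieldType) (n : nat) (A : 'M[R]_n) (c x0 : 'cV[R]_n).
Hypothesis A_posdef : forall u, u != 0 -> 0 < dotv u (A *m u).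

Local Notation x := (bb_iter A c x0).
Local Notation g := (bb_grad A c x0).

Lemma cauchy_step_eq0 u : cauchy_step A u = 0 -> u = 0.
Proof.
apply: contra_eq => u_neq0; rewrite /cauchy_step mulf_neq0 ?invr_eq0 // gt_eqF //.
  exact: dotvv_gt0.
exact: A_posdef.
Qed.

Lemma bb_iterS k : x k.+1 = x k - cauchy_step A (g k.-1) *: g k.
Proof.
(* A vanishing step means g_(k-1) = 0, hence g_k = 0: the BB quotient is then
   0 / 0 = 0 and the iteration is stalled, as the right-hand side predicts. *)
suff [] : x k.+1 = x k - cauchy_step A (g k.-1) *: g k /\ (g k.-1 = 0 -> g k = 0) by [].
elim: k => [|k [IHx IHg]]; first by split; [reflexivity|].
have gkS : g k.+1 = g k - cauchy_step A (g k.-1) *: (A *m g k).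
  by rewrite /bb_grad IHx qgrad_descent.
split; last by move=> /= gk0; rewrite gkS gk0 mulmx0 scaler0 subr0.
have -> : x k.+2 = bb_step A c (x k) (x k.+1) by reflexivity.
have [/cauchy_step_eq0 /IHg gk0 | a_neq0] := eqVneq (cauchy_step A (g k.-1)) 0.
  rewrite gkS IHx gk0 mulmx0 !scaler0 !subr0 bb_step_stalled.
  by rewrite scaler0 subr0.
rewrite /bb_grad IHx.
exact: bb_step_descent.
Qed.

Lemma bb_gradS k : g k.+1 = g k - cauchy_step A (g k.-1) *: (A *m g k).
Proof. by rewrite /bb_grad bb_iterS qgrad_descent. Qed.

End BBIteration.

Section OrthonormalEigenbasis.

Variables (R : realFieldType) (n : nat) (A V : 'M[R]_n) (lam : 'I_n -> R).
Hypothesis V_orthonormal : V^T *m V = 1%:M.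
Hypothesis V_eigen : forall i, A *m col i V = lam i *: col i V.

Lemma dotv_orthonormal (u v : 'cV[R]_n) : dotv (V *m u) (V *m v) = dotv u v.
Proof. by rewrite !dotvE trmx_mul -mulmxA (mulmxA V^T) V_orthonormal mul1mx. Qed.

Lemma orthonormal_inj (u v : 'cV[R]_n) : V *m u = V *m v -> u = v.
Proof. by move=> /(congr1 (mulmx V^T)); rewrite !mulmxA V_orthonormal !mul1mx. Qed.

Lemma orthonormal_span (u : 'cV[R]_n) : u = V *m \col_j (V^T *m u) j 0.
Proof.
have -> : \col_j (V^T *m u) j 0 = V^T *m u by apply/colP => j; rewrite mxE.
by rewrite mulmxA (mulmx1C V_orthonormal) mul1mx.
Qed.

Lemma mulmx_eigen_comb w : A *m (V *m \col_j w j) = V *m \col_j (lam j * w j).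
Proof.
rewrite -!comb_mulmx mulmx_sumr; apply: eq_bigr => j _.
by rewrite -scalemxAr V_eigen scalerA mulrC.
Qed.

Lemma dotv_comb_sqr w : dotv (V *m \col_j w j) (V *m \col_j w j) = \sum_j w j ^+ 2.
Proof. by rewrite dotv_orthonormal dotv_col. Qed.

Lemma dotv_eigen_comb w :
  dotv (V *m \col_j w j) (A *m (V *m \col_j w j)) = \sum_j lam j * w j ^+ 2.
Proof.
rewrite mulmx_eigen_comb dotv_orthonormal dotv_col.
by apply: eq_bigr => j _; rewrite mulrCA expr2.
Qed.

Lemma cauchy_step_eigen w :
  cauchy_step A (V *m \col_j w j) = cauchy_coef lam (fun j => w j ^+ 2).
Proof. by rewrite /cauchy_step dotv_comb_sqr dotv_eigen_comb. Qed.

Lemma eigen_posdef (l : R) : 0 < l -> (forall j, l <= lam j) ->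
  forall u : 'cV[R]_n, u != 0 -> 0 < dotv u (A *m u).
Proof.
move=> l_gt0 l_le u u_neq0; pose w j := (V^T *m u) j 0.
have u_comb : u = V *m \col_j w j by exact: orthonormal_span.
have w_neq0 : \col_j w j != 0.
  by apply: contraNneq u_neq0 => w0; rewrite u_comb w0 mulmx0.
apply: (lt_le_trans (mulr_gt0 l_gt0 (dotvv_gt0 w_neq0))).
rewrite u_comb dotv_eigen_comb dotv_col mulr_sumr; apply: ler_sum => j _.
by rewrite -expr2 ler_wpM2r ?sqr_ge0.
Qed.

End OrthonormalEigenbasis.

Lemma step_factor_le (R : realFieldType) (l1 ln s mu : R) :
  0 < l1 -> 0 < ln -> 0 < mu -> ln^-1 <= s <= l1^-1 ->
  `|1 - s * mu| <= Num.max (mu / l1 - 1) (1 - mu / ln).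
Proof.
move=> l1_gt0 ln_gt0 mu_gt0 /andP[s_ge s_le].
have ub : s * mu <= mu / l1 by rewrite [s * mu]mulrC ler_wpM2l ?(ltW mu_gt0).
have lb : mu / ln <= s * mu by rewrite [s * mu]mulrC ler_wpM2l ?(ltW mu_gt0).
have max1 : mu / l1 - 1 <= Num.max (mu / l1 - 1) (1 - mu / ln) by rewrite le_max lexx.
have max2 : 1 - mu / ln <= Num.max (mu / l1 - 1) (1 - mu / ln) by rewrite le_max lexx orbT.
rewrite ler_norml; apply/andP; split; lra.
Qed.

Section CauchyCoefficient.

Variables (R : realFieldType) (n : nat) (lam w : 'I_n.+1 -> R).
Hypothesis lam0_gt0 : 0 < lam ord0.
Hypothesis lam_sorted : forall i j : 'I_n.+1, (i <= j)%N -> lam i <= lam j.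
Hypothesis w_ge0 : forall j, 0 <= w j.
Hypothesis w_sum_gt0 : 0 < \sum_j w j.

Local Notation l1 := (lam ord0).
Local Notation ln := (lam ord_max).
Local Notation D := (\sum_j w j).
Local Notation L := (\sum_j lam j * w j).

Lemma lam_ge_min j : l1 <= lam j.
Proof. exact: lam_sorted. Qed.

Lemma lam_le_max j : lam j <= ln.
Proof. by apply: lam_sorted; rewrite -ltnS. Qed.

Lemma lam_gt0 j : 0 < lam j.
Proof. exact: lt_le_trans (lam_ge_min j). Qed.

Lemma weighted_sum_bounds : l1 * D <= L <= ln * D.
Proof.
rewrite !mulr_sumr; apply/andP; split; apply: ler_sum => j _; rewrite ler_wpM2r //.
  exact: lam_ge_min.
exact: lam_le_max.
Qed.

Lemma weighted_sum_gt0 : 0 < L.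
Proof.
have /andP[le_L _] := weighted_sum_bounds.
exact: lt_le_trans (mulr_gt0 lam0_gt0 w_sum_gt0) le_L.
Qed.

Lemma cauchy_coef_bounds : ln^-1 <= cauchy_coef lam w <= l1^-1.
Proof.
have /andP[le_L L_le] := weighted_sum_bounds; have ln_gt0 := lam_gt0 ord_max.
rewrite /cauchy_coef ler_pdivlMr ?ler_pdivrMr ?weighted_sum_gt0 //.
by rewrite -!ler_pdivlMl ?invr_gt0 // !invrK L_le -ler_pdivrMl ?invr_gt0 // invrK.
Qed.

Lemma cauchy_coef_factor_le i :
  `|1 - cauchy_coef lam w * lam i| <= Num.max (lam i / l1 - 1) (1 - lam i / ln).
Proof. exact: step_factor_le (lam_gt0 _) (lam_gt0 _) (lam_gt0 _) cauchy_coef_bounds. Qed.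

Lemma mode_sumE (i : 'I_n.+1) : \sum_j (lam j - lam i) * w j = L - lam i * D.
Proof. by rewrite mulr_sumr -sumrB; apply: eq_bigr => j _; rewrite mulrBl. Qed.

Lemma cauchy_coef_factor_shrinking (i : 'I_n.+1) :
  0 <= \sum_j (lam j - lam i) * w j ->
  `|1 - cauchy_coef lam w * lam i| <= 1 - l1 / ln.
Proof.
rewrite mode_sumE subr_ge0 => le_L; have L_gt0 := weighted_sum_gt0.
have le1 : cauchy_coef lam w * lam i <= 1.
  by rewrite /cauchy_coef mulrAC ler_pdivrMr // mul1r mulrC.
have ge : l1 / ln <= cauchy_coef lam w * lam i.
  have /andP[c_ge _] := cauchy_coef_bounds; rewrite [X in _ <= X]mulrC.
  apply: ler_pM (ltW lam0_gt0) _ (lam_ge_min i) c_ge.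
  by rewrite invr_ge0 (ltW (lam_gt0 _)).
by rewrite ger0_norm ?subr_ge0 // lerD2l lerN2.
Qed.

Lemma fluctuation_excess_le (i : 'I_n.+1) :
  \sum_(j < n.+1 | (j < i)%N) w j <= w i -> lam i * D - L <= (lam i - l1) * w i.
Proof.
move=> w_lt_i.
have -> : lam i * D - L = \sum_j (lam i - lam j) * w j.
  by rewrite -opprB -mode_sumE -sumrN; apply: eq_bigr => j _; rewrite -mulNr opprB.
rewrite (bigID (fun j : 'I_n.+1 => (j < i)%N)) /=.
have above : \sum_(j < n.+1 | ~~ (j < i)%N) (lam i - lam j) * w j <= 0.
  apply: sumr_le0 => j; rewrite -leqNgt => le_ij.
  by rewrite mulr_le0_ge0 // subr_le0 lam_sorted.
have below : \sum_(j < n.+1 | (j < i)%N) (lam i - lam j) * w j <= (lam i - l1) * w i.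
  apply: le_trans (ler_wpM2l _ w_lt_i); last by rewrite subr_ge0 lam_ge_min.
  rewrite mulr_sumr; apply: ler_sum => j _.
  by rewrite ler_wpM2r // lerD2l lerN2 lam_ge_min.
lra.
Qed.

Lemma cauchy_coef_factor_fluctuation (i : 'I_n.+1) :
  \sum_j (lam j - lam i) * w j < 0 -> \sum_(j < n.+1 | (j < i)%N) w j <= w i ->
  `|1 - cauchy_coef lam w * lam i| <= 1 - l1 / ln.
Proof.
rewrite mode_sumE subr_lt0 => L_lt w_lt_i.
have L_gt0 := weighted_sum_gt0; have ln_gt0 := lam_gt0 ord_max.
have contract : lam i - l1 <= (1 - l1 / ln) * lam i.
  rewrite mulrBl mul1r lerD2l lerN2 mulrAC ler_pdivrMr // ler_wpM2l ?lam_le_max //.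
  exact: ltW.
have wi_le : lam i * w i <= L.
  rewrite (bigD1 i) //= lerDl sumr_ge0 // => j _.
  by rewrite mulr_ge0 // ltW ?lam_gt0.
have excess_le : lam i * D - L <= (1 - l1 / ln) * L.
  apply: le_trans (fluctuation_excess_le w_lt_i) _.
  apply: le_trans (ler_wpM2r (w_ge0 i) contract) _; rewrite -mulrA ler_wpM2l //.
  by rewrite subr_ge0 ler_pdivrMr // mul1r lam_le_max.
have -> : `|1 - cauchy_coef lam w * lam i| = (lam i * D - L) / L.
  rewrite ltr0_norm; last by rewrite subr_lt0 /cauchy_coef mulrAC ltr_pdivlMr // mul1r mulrC.
  by rewrite /cauchy_coef; field; rewrite gt_eqF.
by rewrite ler_pdivrMr.
Qed.

End CauchyCoefficient.

Section BBCoordinates.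

Variables (R : realFieldType) (n : nat) (A V : 'M[R]_n) (lam : 'I_n -> R).
Variables (c x0 : 'cV[R]_n) (d : nat -> 'I_n -> R).
Hypothesis V_orthonormal : V^T *m V = 1%:M.
Hypothesis V_eigen : forall i, A *m col i V = lam i *: col i V.
Hypothesis A_posdef : forall u, u != 0 -> 0 < dotv u (A *m u).
Hypothesis bb_grad_coord : forall k, bb_grad A c x0 k = \sum_i d k i *: col i V.

Lemma bb_coordS k i :
  d k.+1 i = (1 - cauchy_coef lam (fun j => d k.-1 j ^+ 2) * lam i) * d k i.
Proof.
have g_comb m : bb_grad A c x0 m = V *m \col_j d m j by rewrite bb_grad_coord comb_mulmx.
have := bb_gradS c x0 A_posdef k.
rewrite !g_comb (cauchy_step_eigen V_orthonormal V_eigen) (mulmx_eigen_comb V_eigen).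
rewrite scalemxAr -mulmxBr.
by move=> /(orthonormal_inj V_orthonormal)/colP/(_ i); rewrite !mxE => ->; ring.
Qed.

Lemma bb_coord_weight_gt0 k i : d k.+1 i != 0 -> 0 < \sum_j d k j ^+ 2.
Proof.
move=> d_neq0; rewrite lt_def sumr_ge0 ?andbT // => [|j _]; last exact: sqr_ge0.
apply: contraNneq d_neq0 => /psumr_eq0P d_sq0.
have /eqP := d_sq0 (fun j _ => sqr_ge0 (d k j)) i isT.
by rewrite bb_coordS sqrf_eq0 => /eqP ->; rewrite mulr0.
Qed.

End BBCoordinates.

Theorem proposition1 (R : realFieldType) (n : nat)
  (A : 'M[R]_n.+1) (lam : 'I_n.+1 -> R) (V : 'M[R]_n.+1)
  (c x0 : 'cV[R]_n.+1) (d : nat -> 'I_n.+1 -> R) :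
  A^T = A ->
  (* orthonormal eigenbasis v_i = col i V with A v_i = lam_i v_i *)
  V^T *m V = 1%:M ->
  (forall i, A *m col i V = lam i *: col i V) ->
  0 < lam ord0 ->
  (forall i j : 'I_n.+1, (i <= j)%N -> lam i <= lam j) ->
  (* coordinates of the BB gradients in the eigenbasis *)
  (forall k, bb_grad A c x0 k = \sum_(i < n.+1) d k i *: col i V) ->
  let kappa := lam ord_max / lam ord0 in
  (forall (k : nat) (i : 'I_n.+1), (1 <= k)%N ->
     `|d k.+1 i| <= `|d k i| *
        Num.max (lam i / lam ord0 - 1) (1 - lam i / lam ord_max)) /\
  (forall (k : nat) (i : 'I_n.+1), (1 <= k)%N ->
     (0 <= \sum_(j < n.+1) (lam j - lam i) * d k.-1 j ^+ 2
      \/ (\sum_(j < n.+1) (lam j - lam i) * d k.-1 j ^+ 2 < 0 /\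
          \sum_(j < n.+1 | (j < i)%N) d k.-1 j ^+ 2 <= d k.-1 i ^+ 2)) ->
     `|d k.+1 i| <= (1 - kappa^-1) * `|d k i|).
Proof.
move=> _ V_orth V_eigen lam0_gt0 lam_sorted g_coord kappa.
have A_posdef := eigen_posdef V_orth V_eigen lam0_gt0 (lam_ge_min lam_sorted).
have coordS := bb_coordS V_orth V_eigen A_posdef g_coord.
have weight_gt0 := bb_coord_weight_gt0 V_orth V_eigen A_posdef g_coord.
split=> -[//|k] i _ => [|mode]; rewrite coordS normrM /=;
  have [->|/weight_gt0 w_gt0] := eqVneq (d k.+1 i) 0; rewrite ?normr0 ?mulr0 ?mul0r //;
  have sq_ge0 j : 0 <= d k j ^+ 2 := sqr_ge0 _.
  by rewrite mulrC ler_wpM2l // (cauchy_coef_factor_le lam0_gt0 lam_sorted sq_ge0 w_gt0).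
rewrite ler_wpM2r // /kappa invf_div.
case: mode => [shrinking|[fluctuation dominated]].
  exact: cauchy_coef_factor_shrinking lam0_gt0 lam_sorted sq_ge0 w_gt0 i shrinking.
exact: cauchy_coef_factor_fluctuation lam0_gt0 lam_sorted sq_ge0 w_gt0 i fluctuation dominated.
Qed.
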